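(* Let $x_1,\dots,x_n$ be independent random variables taking values in $[0,1]$ with $\mathbb{E}[x_i]\le\nu$ for all $i$, for some $\nu\in[0,1]$. For any $c\ge1$ and any $\lambda\in\big[0,\frac{\ln c}{4n-3}\big]$, $$\mathbb{E}\exp\big(\lambda(x_1+\dots+x_n)^2\big)\le\exp\big(\lambda cn\nu(1+cn\nu)\big).$$ *)

From HB Require Import structures.
From mathcomp Require Import all_boot all_order all_algebra.
From mathcomp Require Import all_classical all_reals all_analysis.

Set Implicit Arguments.
Unset Strict Implicit.
Unset Printing Implicit Defensive.

Import Order.TTheory GRing.Theory Num.Theory.

Local Open Scope classical_set_scope.
Local Open Scope ring_scope.

Definition mutually_independent d (T : measurableType d) (R : realType)
    (P : probability T R) (n : nat) (X : 'I_n -> T -> R) : Prop :=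
  forall (J : {set 'I_n}) (B : 'I_n -> set R),
    (forall i, measurable (B i)) ->
    P (\bigcap_(i in [set i | i \in J]) (X i @^-1` B i)) =
      (\prod_(i in J) P (X i @^-1` B i))%E.

From HB Require Import structures.
From mathcomp Require Import all_boot all_order all_algebra.
From mathcomp Require Import all_classical all_reals all_analysis.
From mathcomp Require Import measurable_realfun lra ring.

Set Implicit Arguments.
Unset Strict Implicit.
Unset Printing Implicit Defensive.

Import Order.TTheory GRing.Theory Num.Theory numFieldNormedType.Exports.

Local Open Scope classical_set_scope.
Local Open Scope ring_scope.

(* Round each x_i up to the grid {k / (N + 1)}.  This can only increase the sum
   and increases each mean by at most 1 / (N + 1); by independence, the
   expectation of exp(lam (sum of rounded values)^2) becomes a finite sum over
   grid configurations weighted by products of cell probabilities.  That sum is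
   bounded by induction on n: for y in [0, 1] and lam (2 t + 1) <= ln c,
     exp(lam (t + y)^2) <= exp(lam t^2) (1 + c lam (2 t + 1) y),
   which is affine in y, so only the mean of the peeled-off variable matters;
   each step shifts t by c nu at the cost of a factor exp(lam c nu (1 - c nu)).
   If c nu > 1 the trivial bound sum x_i <= n suffices.  Finally N -> oo. *)

Section exponential_bounds.
Variable R : realType.
Implicit Types (c lam nu t y z : R).

Lemma expR_le1Dcx c z : 1 <= c -> 0 <= z <= ln c -> expR z <= 1 + c * z.
Proof.
move=> c1 /andP[z0 zc].
(* [(1 - z) e^z <= 1], hence [e^z <= 1 + z e^z <= 1 + c z]. *)
have e1B : expR z * (1 - z) <= 1.
  have := ler_wpM2l (expR_ge0 z) (expR_ge1Dx (- z)).
  by rewrite -expRD subrr expR0 addrC.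
have ec : expR z <= c by rewrite -(lnK (lt_le_trans ltr01 c1)) ler_expR.
nra.
Qed.

Lemma expR_sqrD_le lam c t y : 0 <= lam -> 1 <= c -> 0 <= t ->
    lam * (2 * t + 1) <= ln c -> 0 <= y <= 1 ->
  expR (lam * (t + y) ^+ 2) <= expR (lam * t ^+ 2) * (1 + c * (lam * (2 * t + 1)) * y).
Proof.
move=> lam0 c1 t0 hc /andP[y0 y1].
have -> : lam * (t + y) ^+ 2 = lam * t ^+ 2 + lam * (2 * t + y) * y by ring.
rewrite expRD ler_wpM2l ?expR_ge0 //.
have le_z : lam * (2 * t + y) * y <= lam * (2 * t + 1) * y.
  by rewrite ler_wpM2r // ler_wpM2l // lerD2l.
have z0 : 0 <= lam * (2 * t + y) * y by rewrite !mulr_ge0 // addr_ge0 ?mulr_ge0.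
have zc : lam * (2 * t + y) * y <= ln c.
  apply: le_trans le_z (le_trans _ hc); rewrite ler_piMr //.
  by rewrite mulr_ge0 // addr_ge0 ?mulr_ge0.
apply: le_trans (expR_le1Dcx c1 _) _; first by rewrite z0 zc.
rewrite lerD2l -[X in _ <= X]mulrA ler_wpM2l //; lra.
Qed.

Lemma sum_expR_sqrD_le (K : finType) (q v : K -> R) lam c nu t :
    0 <= lam -> 1 <= c -> 0 <= nu -> 0 <= t -> lam * (2 * t + 1) <= ln c ->
    (forall k, 0 <= v k <= 1) -> (forall k, 0 <= q k) ->
    \sum_k q k <= 1 -> \sum_k q k * v k <= nu ->
  \sum_k q k * expR (lam * (t + v k) ^+ 2) <=
    expR (lam * (t + c * nu) ^+ 2 + lam * c * nu * (1 - c * nu)).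
Proof.
move=> lam0 c1 nu0 t0 hc v01 q0 sq sqv.
set a := c * (lam * (2 * t + 1)).
have a0 : 0 <= a by rewrite !mulr_ge0 //; lra.
apply: le_trans (ler_sum _ (fun k _ => ler_wpM2l (q0 k)
  (expR_sqrD_le lam0 c1 t0 hc (v01 k)))) _.
have -> : \sum_k q k * (expR (lam * t ^+ 2) * (1 + a * v k)) =
    expR (lam * t ^+ 2) * (\sum_k q k + a * \sum_k q k * v k).
  rewrite mulr_sumr -big_split mulr_sumr /=.
  by apply: eq_bigr => k _; ring.
have -> : lam * (t + c * nu) ^+ 2 + lam * c * nu * (1 - c * nu) =
    lam * t ^+ 2 + a * nu by rewrite /a; ring.
rewrite expRD ler_wpM2l ?expR_ge0 //.
apply: le_trans (expR_ge1Dx _); have := ler_wpM2l a0 sqv; lra.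
Qed.

End exponential_bounds.

Lemma le_continuous_harmonic (R : realType) (f : R -> R) (x : R) (e : \bar R) :
  {for x, continuous f} -> (forall m, e <= (f (x + harmonic m))%:E)%E -> (e <= (f x)%:E)%E.
Proof.
move=> fx; case: e => [r le_r| /(_ 0%N) //|_]; last exact: leNye.
have cvgx : (fun m => x + harmonic m) @ \oo --> x.
  by rewrite -[X in _ --> X]addr0; exact: cvgD (cvg_cst _) cvg_harmonic.
have cvgf : (f \o (fun m => x + harmonic m)) @ \oo --> f x by exact: continuous_cvg.
rewrite lee_fin -(cvg_lim _ cvgf) //; apply: limr_ge; first exact: cvgP cvgf.
by apply: nearW => m; rewrite -lee_fin; exact: le_r.
Qed.

Lemma continuous_expR_quadratic (R : realType) (a b x : R) :
  {for x, continuous (fun u => expR (a * u * (1 + b * u)))}.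
Proof.
apply: (continuous_comp (f := fun u => a * u * (1 + b * u))); last exact: continuous_expR.
apply: cvgM; first exact: cvgM (cvg_cst _) cvg_id.
exact: cvgD (cvg_cst _) (cvgM (cvg_cst _) cvg_id).
Qed.

Section ffun_cons.
Variable K : finType.

Definition ffun_cons {n} (k : K) (g : {ffun 'I_n -> K}) : {ffun 'I_n.+1 -> K} :=
  [ffun i => if unlift ord0 i is Some j then g j else k].

Lemma ffun_cons0 n k (g : {ffun 'I_n -> K}) : ffun_cons k g ord0 = k.
Proof. by rewrite ffunE unlift_none. Qed.

Lemma ffun_consS n k (g : {ffun 'I_n -> K}) j : ffun_cons k g (lift ord0 j) = g j.
Proof. by rewrite ffunE liftK. Qed.

Lemma big_ffun_ordS (V : Type) (idx : V) (op : Monoid.com_law idx) n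
    (F : {ffun 'I_n.+1 -> K} -> V) :
  \big[op/idx]_(f : {ffun 'I_n.+1 -> K}) F f =
  \big[op/idx]_(k : K) \big[op/idx]_(g : {ffun 'I_n -> K}) F (ffun_cons k g).
Proof.
rewrite pair_big (reindex (fun p : K * {ffun 'I_n -> K} => ffun_cons p.1 p.2)) //=.
exists (fun f : {ffun 'I_n.+1 -> K} => (f ord0, [ffun j => f (lift ord0 j)])).
  move=> [k g] _ /=; rewrite ffun_cons0; congr pair; apply/ffunP => j.
  by rewrite ffunE ffun_consS.
move=> f _; apply/ffunP => i; rewrite ffunE.
by case: unliftP => [j ->|->]; rewrite ?ffunE.
Qed.

Lemma sum_prod_ffun_ordS (R : pzSemiRingType) n (q : 'I_n.+1 -> K -> R) (v : K -> R)
    (G : R -> R) :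
  \sum_(f : {ffun 'I_n.+1 -> K}) (\prod_i q i (f i)) * G (\sum_i v (f i)) =
  \sum_k q ord0 k * \sum_(g : {ffun 'I_n -> K})
    (\prod_i q (lift ord0 i) (g i)) * G (v k + \sum_i v (g i)).
Proof.
rewrite big_ffun_ordS; apply: eq_bigr => k _; rewrite mulr_sumr; apply: eq_bigr => g _.
rewrite !big_ord_recl ffun_cons0 mulrA.
by congr (_ * _ * G (_ + _)); apply: eq_bigr => i _; rewrite ffun_consS.
Qed.

End ffun_cons.

Section product_sum.
Variables (R : realType) (K : finType) (v : K -> R).
Hypothesis v01 : forall k, 0 <= v k <= 1.
Variables (lam c nu : R).
Hypotheses (lam0 : 0 <= lam) (c1 : 1 <= c) (nu0 : 0 <= nu) (cnu1 : c * nu <= 1).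

(* The left-hand side is [E exp(lam (a + v(X_1) + ... + v(X_n))^2)] for
   independent [X_i] distributed according to the sub-probabilities [q i]. *)
Lemma sum_prod_expR_sqr_le n (q : 'I_n -> K -> R) (a : R) :
    (forall i k, 0 <= q i k) -> (forall i, \sum_k q i k <= 1) ->
    (forall i, \sum_k q i k * v k <= nu) ->
    0 <= a -> lam * (2 * (a + n%:R) - 1) <= ln c ->
  \sum_(f : {ffun 'I_n -> K}) (\prod_i q i (f i)) * expR (lam * (a + \sum_i v (f i)) ^+ 2)
    <= expR (lam * (a + n%:R * c * nu) ^+ 2 + n%:R * (lam * c * nu * (1 - c * nu))).
Proof.
elim: n q a => [|n IH] q a q0 sq sqv a0 ha.
  rewrite (big_pred1 (ffun0 (card_ord 0) : {ffun 'I_0 -> K})) => [|f]; last first.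
    by symmetry; apply/eqP/ffunP => -[].
  by rewrite !big_ord0 mul1r !mul0r !addr0.
have nS : n.+1%:R = n%:R + 1 :> R by rewrite -natr1.
have v0 k : 0 <= v k by case/andP: (v01 k).
have v1 k : v k <= 1 by case/andP: (v01 k).
set t := a + n%:R * c * nu.
set m := n%:R * (lam * c * nu * (1 - c * nu)).
rewrite (sum_prod_ffun_ordS q v (fun s => expR (lam * (a + s) ^+ 2))).
have IHk k : \sum_(g : {ffun 'I_n -> K})
      (\prod_i q (lift ord0 i) (g i)) * expR (lam * (a + (v k + \sum_i v (g i))) ^+ 2)
    <= expR m * expR (lam * (t + v k) ^+ 2).
  under eq_bigr do rewrite addrA.
  rewrite -expRD [m + _]addrC (_ : t + v k = a + v k + n%:R * c * nu); last exact: addrAC.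
  apply: (IH (fun i => q (lift ord0 i))) => [i k'|i|i||];
    [exact: q0 | exact: sq | exact: sqv | |].
    by rewrite addr_ge0 // v0.
  apply: le_trans ha; rewrite ler_wpM2l // nS; have := v1 k; lra.
apply: le_trans (ler_sum _ (fun k _ => ler_wpM2l (q0 ord0 k) (IHk k))) _.
under eq_bigr do rewrite mulrCA; rewrite -mulr_sumr.
have t0 : 0 <= t by rewrite addr_ge0 // !mulr_ge0 // (le_trans ler01 c1).
have ht : lam * (2 * t + 1) <= ln c.
  apply: le_trans ha; rewrite ler_wpM2l //.
  have : n%:R * (c * nu) <= n%:R :> R by rewrite ler_piMr.
  rewrite /t nS mulrA; lra.
have step := sum_expR_sqrD_le lam0 c1 nu0 t0 ht v01 (q0 ord0) (sq ord0) (sqv ord0).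
apply: le_trans (ler_wpM2l (expR_ge0 m) step) _.
by rewrite -expRD ler_expR /t /m nS; lra.
Qed.

End product_sum.

Section expectation_simple.
Context d (T : measurableType d) (R : realType) (P : probability T R).

Lemma expectation_sum_indic (I : finType) (a : I -> R) (A : I -> set T) :
    (forall j, 0 <= a j) -> (forall j, measurable (A j)) ->
  ('E_P[fun w => (\sum_j a j * \1_(A j) w)%R] = (\sum_j a j * fine (P (A j)))%:E)%E.
Proof.
move=> a0 mA; rewrite unlock.
under eq_integral do rewrite -sumEFin.
rewrite ge0_integral_sum //; last 2 first.
- by move=> j; apply/measurable_EFinP; apply: measurable_funM.
- by move=> j w _; rewrite lee_fin mulr_ge0.
rewrite -sumEFin; apply: eq_bigr => j _.
under eq_integral do rewrite EFinM.
rewrite ge0_integralZl_EFin //; last exact/measurable_EFinP/measurable_indic.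
by rewrite integral_indic // setIT EFinM fineK // fin_num_measure.
Qed.

End expectation_simple.

Section grid.
Variables (R : realType) (N : nat).

Definition grid (k : 'I_N.+2) : R := k%:R / N.+1%:R.

Definition cell (k : 'I_N.+2) : set R := [set y | Num.ceil (N.+1%:R * y) = k%:Z].

Definition cell_index (y : R) : 'I_N.+2 := inord `|Num.ceil (N.+1%:R * y)|%N.

Lemma grid_ge0 k : 0 <= grid k.
Proof. by rewrite divr_ge0. Qed.

Lemma grid_le1 k : grid k <= 1.
Proof. by rewrite ler_pdivrMr // mul1r ler_nat -ltnS. Qed.

Lemma cellE k y : cell k y <-> (k%:R - 1) / N.+1%:R < y <= grid k.
Proof.
rewrite /cell /grid /= ltr_pdivrMr // ler_pdivlMr // !(mulrC y) -(intrB _ k%:Z 1).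
by rewrite -ceil_eq; split => [->|/eqP].
Qed.

Lemma measurable_cell k : measurable (cell k).
Proof.
have -> : cell k = `]((k%:R - 1) / N.+1%:R), grid k]%classic.
  by apply/seteqP; split => y /=; rewrite in_itv /= => /cellE.
exact: measurable_itv.
Qed.

Lemma cell_index_cell y : 0 <= y <= 1 -> cell (cell_index y) y.
Proof.
move=> /andP[y0 y1].
have ceil0 : 0 <= Num.ceil (N.+1%:R * y).
  by rewrite ceil_ge0 (lt_le_trans (ltrN10 R)) ?mulr_ge0.
have ceilN : Num.ceil (N.+1%:R * y) <= N.+1%:Z.
  by rewrite ceil_le_int ger_pMr.
rewrite /cell /cell_index /= inordK; first by rewrite gez0_abs.
by rewrite ltnS -lez_nat gez0_abs.
Qed.

Lemma cell_inj y k k' : cell k y -> cell k' y -> k = k'.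
Proof. by rewrite /cell /= => -> [] /val_inj. Qed.

Lemma cell_le_grid k y : cell k y -> y <= grid k.
Proof. by move=> /cellE /andP[]. Qed.

Lemma grid_le_cell k y : cell k y -> grid k <= y + N.+1%:R^-1.
Proof.
move=> /cellE /andP[lty _].
have -> : grid k = (k%:R - 1) / N.+1%:R + N.+1%:R^-1 by rewrite mulrBl div1r subrK.
by rewrite lerD2r ltW.
Qed.

End grid.

Arguments grid {R N}.
Arguments cell {R N}.

Section discretization.
Context d (T : measurableType d) (R : realType) (P : probability T R).
Variables (N n : nat) (x : 'I_n -> {RV P >-> R}).
Hypothesis x01 : forall i w, 0 <= x i w <= 1.

Definition cell_prob i (k : 'I_N.+2) := fine (P (x i @^-1` cell k)).

Lemma measurable_cell_preimage i (k : 'I_N.+2) : measurable (x i @^-1` cell k).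
Proof.
by rewrite -[_ @^-1` _]setTI; apply: measurable_funPT => //; exact: measurable_cell.
Qed.

Lemma cell_prob_ge0 i (k : 'I_N.+2) : 0 <= cell_prob i k.
Proof. exact: fine_ge0. Qed.

Lemma sum_indic_cell i (g : 'I_N.+2 -> R) w :
  \sum_k g k * \1_(x i @^-1` cell k) w = g (cell_index N (x i w)).
Proof.
have wi := cell_index_cell N (x01 i w).
rewrite (bigD1 (cell_index N (x i w))) //= big1 ?addr0.
  by rewrite indicE mem_set ?mulr1.
move=> k ki; rewrite indicE memNset ?mulr0 // => /(cell_inj wi) ik.
by rewrite ik eqxx in ki.
Qed.

Lemma measurable_cell_index i (g : 'I_N.+2 -> R) :
  measurable_fun [set: T] (fun w => g (cell_index N (x i w))).
Proof.
rewrite -(funext (sum_indic_cell i g)); apply: measurable_sum => k.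
exact/measurable_funM/measurable_indic/measurable_cell_preimage.
Qed.

Lemma expectation_cell i (g : 'I_N.+2 -> R) : (forall k, 0 <= g k) ->
  ('E_P[fun w => g (cell_index N (x i w))] = (\sum_k g k * cell_prob i k)%:E)%E.
Proof.
move=> g0; rewrite -expectation_sum_indic //; last exact: measurable_cell_preimage.
by congr expectation; apply/funext => w; rewrite sum_indic_cell.
Qed.

Lemma sum_cell_prob i : \sum_k cell_prob i k = 1.
Proof.
apply: EFin_inj; rewrite -(expectation_cst P 1) (expectation_cell i (fun=> ler01)).
by congr (_%:E); apply: eq_bigr => k _; rewrite mul1r.
Qed.

Lemma sum_cell_prob_grid i nu : ('E_P[x i] <= nu%:E)%E ->
  \sum_k cell_prob i k * grid k <= nu + N.+1%:R^-1.
Proof.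
move=> Exi; rewrite -lee_fin.
under eq_bigr do rewrite mulrC.
rewrite -expectation_cell; last exact: grid_ge0.
have x0 w : 0 <= x i w by case/andP: (x01 i w).
apply: (@le_trans _ _ 'E_P[fun w => (x i w + N.+1%:R^-1)%R]%E).
  apply: expectation_le => [||w|w|].
  - exact: measurable_cell_index.
  - by apply: measurable_funD => //; exact: measurable_funPT.
  - exact: grid_ge0.
  - by rewrite addr_ge0.
  - by apply: aeW => w; apply: grid_le_cell; exact: cell_index_cell.
have -> : ('E_P[fun w => (x i w + N.+1%:R^-1)%R] = 'E_P[x i] + (N.+1%:R^-1)%:E)%E.
  rewrite unlock; under eq_integral do rewrite EFinD.
  rewrite ge0_integralD ?integral_cst //= ?probability_setT ?mule1 //.
  - by move=> w _; rewrite lee_fin.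
  - by apply/measurable_EFinP; exact: measurable_funPT.
by rewrite EFinD leeD2r.
Qed.

Hypothesis x_indep : mutually_independent P (fun i => (x i : T -> R)).

(* The intersection is written as in [mutually_independent] with [J = setT]. *)
Definition cells_event (f : {ffun 'I_n -> 'I_N.+2}) : set T :=
  \bigcap_(i in [set i | i \in [set: 'I_n]%SET]) (x i @^-1` cell (f i)).

Lemma measurable_cells_event f : measurable (cells_event f).
Proof.
apply: fin_bigcap_measurable; first exact: finite_finset.
by move=> i _; exact: measurable_cell_preimage.
Qed.

Lemma cells_event_prob f : fine (P (cells_event f)) = \prod_i cell_prob i (f i).
Proof.
rewrite /cells_event (x_indep [set: 'I_n]%SET (fun i => measurable_cell (f i))).
rewrite (eq_bigr (fun i => (cell_prob i (f i))%:E)); last first.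
  by move=> i _; rewrite fineK // fin_num_measure //; exact: measurable_cell_preimage.
by rewrite prodEFin /=; apply: eq_bigl => i; rewrite inE.
Qed.

Lemma measurable_expR_sqr_sum lam :
  measurable_fun [set: T] (fun w => expR (lam * (\sum_i x i w) ^+ 2)).
Proof.
apply: measurableT_comp => //; apply: measurable_funM => //; apply: measurable_funX.
by apply: measurable_sum => i; exact: measurable_funPT.
Qed.

Lemma expectation_expR_sqr_le_grid lam : 0 <= lam ->
  ('E_P[fun w => expR (lam * (\sum_i x i w) ^+ 2)] <=
   (\sum_(f : {ffun 'I_n -> 'I_N.+2})
      (\prod_i cell_prob i (f i)) * expR (lam * (0 + \sum_i grid (f i)) ^+ 2))%:E)%E.
Proof.
move=> lam0.
set G := fun f : {ffun 'I_n -> 'I_N.+2} => expR (lam * (0 + \sum_i grid (f i)) ^+ 2).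
have -> : \sum_(f : {ffun 'I_n -> 'I_N.+2}) (\prod_i cell_prob i (f i)) * G f =
    \sum_f G f * fine (P (cells_event f)).
  by apply: eq_bigr => f _; rewrite cells_event_prob mulrC.
rewrite -expectation_sum_indic; last 2 first.
- by move=> f; exact: expR_ge0.
- exact: measurable_cells_event.
apply: expectation_le.
- exact: measurable_expR_sqr_sum.
- apply: measurable_sum => f; apply: measurable_funM => //.
  exact/measurable_indic/measurable_cells_event.
- by move=> w; exact: expR_ge0.
- by move=> w; apply: sumr_ge0 => f _; rewrite mulr_ge0 ?expR_ge0 ?indicE.
apply: aeW => w.
pose fw := [ffun i => cell_index N (x i w)].
rewrite (bigD1 fw) //= indicE mem_set; last first.
  by move=> i _ /=; rewrite ffunE; exact: cell_index_cell.
rewrite mulr1; apply: le_trans (_ : G fw <= _); last first.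
  by rewrite lerDl; apply: sumr_ge0 => f _; rewrite mulr_ge0 ?expR_ge0 ?indicE.
have x0 i : 0 <= x i w by case/andP: (x01 i w).
rewrite /G ler_expR add0r ler_wpM2l // ler_sqr ?nnegrE ?sumr_ge0 // => [|i _].
  by apply: ler_sum => i _; rewrite ffunE; apply/cell_le_grid/cell_index_cell.
exact: grid_ge0.
Qed.

Lemma expectation_expR_sqr_le_n lam : 0 <= lam ->
  ('E_P[fun w => expR (lam * (\sum_i x i w) ^+ 2)] <= (expR (lam * n%:R ^+ 2))%:E)%E.
Proof.
move=> lam0; rewrite -(expectation_cst P); apply: expectation_le => //.
- exact: measurable_expR_sqr_sum.
- by move=> w; exact: expR_ge0.
have x0 w i : 0 <= x i w by case/andP: (x01 i w).
apply: aeW => w /=; rewrite ler_expR ler_wpM2l // ler_sqr ?nnegrE ?sumr_ge0 //.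
rewrite -[n in n%:R]card_ord -sumr_const.
by apply: ler_sum => i _; case/andP: (x01 i w).
Qed.

Lemma expectation_expR_sqr_le_grid_mean lam c nu : 0 <= lam -> 1 <= c -> 0 <= nu ->
    (forall i, ('E_P[x i] <= nu%:E)%E) -> lam * (2 * n%:R - 1) <= ln c ->
  ('E_P[fun w => expR (lam * (\sum_i x i w) ^+ 2)] <=
   (expR (lam * c * n%:R * (nu + N.+1%:R^-1) * (1 + c * n%:R * (nu + N.+1%:R^-1))))%:E)%E.
Proof.
move=> lam0 c1 nu0 Ex hc; set nu' := nu + N.+1%:R^-1.
have nu'0 : 0 <= nu' by rewrite addr_ge0.
have n0 : 0 <= n%:R :> R by [].
have [cnu1|cnu1] := leP (c * nu') 1.
  apply: le_trans (expectation_expR_sqr_le_grid lam0) _; rewrite lee_fin.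
  have grid01 k : 0 <= @grid R N k <= 1 by rewrite grid_ge0 grid_le1.
  apply: le_trans (sum_prod_expR_sqr_le grid01 lam0 c1 nu'0 cnu1 cell_prob_ge0 _
    (fun i => sum_cell_prob_grid (Ex i)) (lexx 0) _) _.
  - by move=> i; rewrite sum_cell_prob.
  - by rewrite add0r.
  rewrite ler_expR add0r -subr_ge0.
  have -> : lam * c * n%:R * nu' * (1 + c * n%:R * nu') -
      (lam * (n%:R * c * nu') ^+ 2 + n%:R * (lam * c * nu' * (1 - c * nu'))) =
      n%:R * lam * (c * nu') ^+ 2 by ring.
  exact: mulr_ge0 (mulr_ge0 n0 lam0) (sqr_ge0 _).
apply: le_trans (expectation_expR_sqr_le_n lam0) _; rewrite lee_fin ler_expR.
have ncnu : n%:R <= c * n%:R * nu' by nra.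
have sq : n%:R ^+ 2 <= c * n%:R * nu' * (1 + c * n%:R * nu') by nra.
by have := ler_wpM2l lam0 sq; rewrite !mulrA.
Qed.

End discretization.

Theorem lemma1 (d : measure_display) (T : measurableType d) (R : realType)
    (P : probability T R) (n : nat) (x : 'I_n -> {RV P >-> R})
    (nu c lambda : R) :
  mutually_independent P (fun i => (x i : T -> R)) ->
  (forall i w, 0 <= x i w <= 1) ->
  0 <= nu <= 1 ->
  (forall i, ('E_P[x i] <= nu%:E)%E) ->
  1 <= c ->
  0 <= lambda <= ln c / (4 * n%:R - 3) ->
  ('E_P[fun w => expR (lambda * (\sum_(i < n) x i w) ^+ 2)]
     <= (expR (lambda * c * n%:R * nu * (1 + c * n%:R * nu)))%:E)%E.
Proof.
move=> x_indep x01 /andP[nu0 _] Ex c1 /andP[lam0 lam_le].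
have lam_ln : lambda * (2 * n%:R - 1) <= ln c.
  have lnc0 := ln_ge0 c1.
  have [->|n_gt0] := posnP n; first by rewrite mulr0 add0r; lra.
  have n1 : 1 <= n%:R :> R by rewrite ler1n.
  rewrite ler_pdivlMr in lam_le; last lra.
  by apply: le_trans lam_le; rewrite ler_wpM2l //; lra.
have cont := @continuous_expR_quadratic R (lambda * c * n%:R) (c * n%:R) nu.
apply: (le_continuous_harmonic cont) => m.
exact: (expectation_expR_sqr_le_grid_mean m x01 x_indep lam0 c1 nu0 Ex lam_ln).
Qed.
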